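(* Let $\mathcal A,\mathcal B>0$, $\alpha,\beta\in(0,1)$, $h,\tau>0$. If $$\frac{\tau^{\alpha}(-\alpha^2+4\alpha-2)\mathcal A+\tau^{\beta}(-\beta^2+4\beta-2)\mathcal B}{h^2}\le\frac{37}{120},$$ then for every real $\theta$, with $s=\sin^2(\theta h/2)$, $$\mathcal P=\Big[1-\tfrac{8}{45}s^2\Big]-4g_1^{(\alpha,\beta)}s\Big[1+\tfrac13 s\Big]\ge0.$$
   Context: $\varpi_\ell^{(\sigma)}=(-1)^\ell\binom{\sigma}{\ell}$, $g_0^{(\sigma)}=\frac{1+\sigma}{2}\varpi_0^{(\sigma)}$, $g_\ell^{(\sigma)}=\frac{1+\sigma}{2}\varpi_\ell^{(\sigma)}+\frac{1-\sigma}{2}\varpi_{\ell-1}^{(\sigma)}$ ($\ell\ge1$); $\mu_\alpha=\tau^\alpha\mathcal A/h^2$, $\mu_\beta=\tau^\beta\mathcal B/h^2$, $g_\ell^{(\alpha,\beta)}=\mu_\alpha g_\ell^{(1-\alpha)}+\mu_\beta g_\ell^{(1-\beta)}$. *)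

From Stdlib Require Import Reals.
Open Scope R_scope.

Fixpoint gbinom (sigma : R) (l : nat) : R :=
  match l with
  | O => 1
  | S l' => gbinom sigma l' * (sigma - INR l') / INR (S l')
  end.

Definition varpi (sigma : R) (l : nat) : R := (-1) ^ l * gbinom sigma l.

Definition gcoef (sigma : R) (l : nat) : R :=
  match l with
  | O => (1 + sigma) / 2 * varpi sigma 0
  | S l' => (1 + sigma) / 2 * varpi sigma l + (1 - sigma) / 2 * varpi sigma l'
  end.

Definition mu (tau gam C h : R) : R := Rpower tau gam * C / h ^ 2.

Definition gab (A B alpha beta h tau : R) (l : nat) : R :=
  mu tau alpha A h * gcoef (1 - alpha) l + mu tau beta B h * gcoef (1 - beta) l.

From Stdlib Require Import Reals Lra Psatz.
Open Scope R_scope.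

(* With X the left-hand side of the hypothesis, g_1^(alpha,beta) = X / 2, so
   P = 1 - 8/45 s^2 - 2 X s (1 + s/3) with s in [0, 1].  For X <= 0 this is at
   least 1 - 8/45; otherwise P decreases in X and in s, and at X = 37/120, s = 1
   it equals 1 - 8/45 - 37/45 = 0. *)

Lemma gcoef_1_sub (x : R) : gcoef (1 - x) 1 = (- x ^ 2 + 4 * x - 2) / 2.
Proof. unfold gcoef, varpi; simpl; field. Qed.

Lemma gab_1 (A B alpha beta h tau : R) : h <> 0 ->
  gab A B alpha beta h tau 1 =
  (Rpower tau alpha * (- alpha ^ 2 + 4 * alpha - 2) * A
   + Rpower tau beta * (- beta ^ 2 + 4 * beta - 2) * B) / h ^ 2 / 2.
Proof. intros hh; unfold gab, mu; rewrite !gcoef_1_sub; field; exact hh. Qed.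

Lemma sin_pow2_bounds (x : R) : 0 <= sin x ^ 2 <= 1.
Proof.
  pose proof (sin2 x) as Hsin2; pose proof (Rle_0_sqr (cos x)).
  unfold Rsqr in *; simpl; nra.
Qed.

Lemma symbol_nonneg (X s : R) : X <= 37 / 120 -> 0 <= s <= 1 ->
  0 <= (1 - 8 / 45 * s ^ 2) - 2 * X * s * (1 + 1 / 3 * s).
Proof.
  intros HX Hs.
  assert (Hq : 0 <= s * (1 + 1 / 3 * s) <= 4 / 3) by nra.
  destruct (Rle_dec X 0); nra.
Qed.

Theorem lemma6 (A B alpha beta h tau : R)
  (hA : 0 < A) (hB : 0 < B)
  (ha0 : 0 < alpha) (ha1 : alpha < 1) (hb0 : 0 < beta) (hb1 : beta < 1)
  (hh : 0 < h) (ht : 0 < tau)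
  (hcond : (Rpower tau alpha * (- alpha ^ 2 + 4 * alpha - 2) * A
            + Rpower tau beta * (- beta ^ 2 + 4 * beta - 2) * B) / h ^ 2 <= 37 / 120) :
  forall theta : R,
    let s := sin (theta * h / 2) ^ 2 in
    0 <= (1 - 8 / 45 * s ^ 2) - 4 * gab A B alpha beta h tau 1 * s * (1 + 1 / 3 * s).
Proof.
  intros theta s.
  rewrite gab_1 by lra.
  set (X := (Rpower tau alpha * (- alpha ^ 2 + 4 * alpha - 2) * A
            + Rpower tau beta * (- beta ^ 2 + 4 * beta - 2) * B) / h ^ 2) in *.
  replace (4 * (X / 2)) with (2 * X) by field.
  exact (symbol_nonneg X s hcond (sin_pow2_bounds (theta * h / 2))).
Qed.
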